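(* Let $L=L_1\oplus L_2$ be a finite-dimensional Lie algebra which is the direct sum of ideals $L_1,L_2$. Then: (i) if there exist Lie algebras $H_1,H_2$ with $H_1^2\cong L_1$ and $H_2^2\cong L_2$, then there is a Lie algebra $H$ with $H^2\cong L$; (ii) if there is a Lie algebra $H$ with $H^2\cong L$ and $Z(L_1)=0$, then there is a Lie algebra $K$ with $K^2\cong L_1$.
   Context: $H^2=[H,H]$ denotes the derived algebra; $Z(L_1)$ is the centre of $L_1$. *)

From HB Require Import structures.
From mathcomp Require Import all_boot all_order all_algebra.
Set Implicit Arguments. Unset Strict Implicit. Unset Printing Implicit Defensive.
Import GRing.Theory.
Local Open Scope ring_scope.

Record lieAlg (F : fieldType) := LieAlg {
  lie_sort :> vectType F;
  lie_br : lie_sort -> lie_sort -> lie_sort;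
  lie_linl : forall (a : F) (x y z : lie_sort),
      lie_br (a *: x + y) z = a *: lie_br x z + lie_br y z;
  lie_linr : forall (a : F) (x y z : lie_sort),
      lie_br z (a *: x + y) = a *: lie_br z x + lie_br z y;
  lie_alt : forall x : lie_sort, lie_br x x = 0;
  lie_jacobi : forall x y z : lie_sort,
      lie_br x (lie_br y z) + lie_br y (lie_br z x) + lie_br z (lie_br x y) = 0
}.

Arguments lie_br {F L} x y : rename.

Section Defs.
Variable F : fieldType.

Definition lie_ideal (L : lieAlg F) (I : {vspace L}) : Prop :=
  forall x y : L, y \in I -> lie_br x y \in I.

(* the derived algebra L^2 = [L,L]: the span of all brackets, computed as the
   span of brackets of basis vectors (equal by bilinearity) *)
Definition derived (L : lieAlg F) : {vspace L} :=
  (<<[seq lie_br u v | u <- vbasis (fullv : {vspace L}),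
                        v <- vbasis (fullv : {vspace L})]>>)%VS.

Definition derived_iso (L H : lieAlg F) (U : {vspace L}) : Prop :=
  exists f : 'Hom(L, H),
    [/\ (f @: U)%VS = derived H,
        {in U &, injective f} &
        forall x y : L, x \in U -> y \in U -> f (lie_br x y) = lie_br (f x) (f y)].

Definition center_trivial (L : lieAlg F) (U : {vspace L}) : Prop :=
  forall x : L, x \in U -> (forall y : L, y \in U -> lie_br x y = 0) -> x = 0.

End Defs.

From HB Require Import structures.
From mathcomp Require Import all_boot all_order all_algebra.
Set Implicit Arguments. Unset Strict Implicit. Unset Printing Implicit Defensive.
Local Open Scope ring_scope.
Import GRing.Theory.

(* (i) The product H1 x H2 has derived algebra H1^2 x H2^2, which is L1 x L2 = L.
   (ii) Transport L2 into H^2 by the isomorphism f.  Since Z(L1) = 0, the Jacobi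
   identity shows that [h, f L2] has no L1-component, so f L2 is an ideal of H;
   then K = H / f L2 has K^2 = H^2 / f L2 = f L1, which is isomorphic to L1. *)

Section Bracket.
Variables (F : fieldType) (L : lieAlg F).
Implicit Types x y z : L.

Lemma lie_brDl x y z : lie_br (x + y) z = lie_br x z + lie_br y z.
Proof. by have := lie_linl 1 x y z; rewrite !scale1r. Qed.

Lemma lie_brDr x y z : lie_br z (x + y) = lie_br z x + lie_br z y.
Proof. by have := lie_linr 1 x y z; rewrite !scale1r. Qed.

Lemma lie_br0l z : lie_br 0 z = 0.
Proof. by apply: (addrI (lie_br 0 z)); rewrite addr0 -lie_brDl addr0. Qed.

Lemma lie_br0r z : lie_br z 0 = 0.
Proof. by apply: (addrI (lie_br z 0)); rewrite addr0 -lie_brDr addr0. Qed.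

Lemma lie_brZl a x z : lie_br (a *: x) z = a *: lie_br x z.
Proof. by have := lie_linl a x 0 z; rewrite !addr0 lie_br0l addr0. Qed.

Lemma lie_brZr a x z : lie_br z (a *: x) = a *: lie_br z x.
Proof. by have := lie_linr a x 0 z; rewrite !addr0 lie_br0r addr0. Qed.

Lemma lie_brBr x y z : lie_br z (x - y) = lie_br z x - lie_br z y.
Proof. by rewrite lie_brDr -scaleN1r lie_brZr scaleN1r. Qed.

Lemma lie_brC x y : lie_br y x = - lie_br x y.
Proof.
apply/eqP; rewrite -addr_eq0 addrC; apply/eqP.
by have := lie_alt (x + y); rewrite lie_brDl !lie_brDr !lie_alt add0r addr0.
Qed.

Lemma lie_brsuml I (r : seq I) (P : pred I) (G : I -> L) z :
  lie_br (\sum_(i <- r | P i) G i) z = \sum_(i <- r | P i) lie_br (G i) z.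
Proof.
by apply: (big_morph (lie_br^~ z)); [move=> x y; apply: lie_brDl | apply: lie_br0l].
Qed.

Lemma lie_brsumr I (r : seq I) (P : pred I) (G : I -> L) z :
  lie_br z (\sum_(i <- r | P i) G i) = \sum_(i <- r | P i) lie_br z (G i).
Proof.
by apply: (big_morph (lie_br z)); [move=> x y; apply: lie_brDr | apply: lie_br0r].
Qed.

Lemma lie_idealr (I : {vspace L}) x y : lie_ideal I -> y \in I -> lie_br y x \in I.
Proof. by move=> idI Iy; rewrite lie_brC rpredN idI. Qed.

Lemma mem_derived x y : lie_br x y \in derived L.
Proof.
rewrite (coord_vbasis (memvf x)) (coord_vbasis (memvf y)) lie_brsuml.
apply: rpred_sum => i _; rewrite lie_brZl lie_brsumr; apply: rpredZ.
apply: rpred_sum => j _; rewrite lie_brZr; apply: rpredZ.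
by apply/memv_span/allpairs_f; apply: mem_nth; rewrite size_tuple.
Qed.

Lemma derived_sub (V : {vspace L}) :
  (forall x y, lie_br x y \in V) -> (derived L <= V)%VS.
Proof. by move=> brV; apply/span_subvP => _ /allpairsP [[u v] [_ _ ->]]. Qed.

End Bracket.

Lemma limg_derived (F : fieldType) (A B : lieAlg F) (f : 'Hom(A, B)) :
  {morph f : x y / lie_br x y} -> (f @: derived A <= derived B)%VS.
Proof.
move=> fM; rewrite limg_span; apply/span_subvP => w /mapP [uv].
by case/allpairsP => [[u v] [_ _ ->]] ->; rewrite fM mem_derived.
Qed.

Lemma mem_derived_lfun (F : fieldType) (A B : lieAlg F) (f : 'Hom(A, B)) a :
  {morph f : x y / lie_br x y} -> a \in derived A -> f a \in derived B.
Proof. by move=> fM Da; apply: (subvP (limg_derived fM)); rewrite memv_img. Qed.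

Section DirectSumProjection.
Variables (F : fieldType) (vT : vectType F) (U V : {vspace vT}).
Hypothesis capUV : (U :&: V = 0)%VS.

Lemma memv_cap_eq0 u : u \in U -> u \in V -> u = 0.
Proof. by move=> Uu Vu; apply/eqP; rewrite -memv0 -capUV memv_cap Uu. Qed.

Lemma daddv_pi_eq0 v : v \in V -> daddv_pi U V v = 0.
Proof.
move=> Vv; apply: (addIr v); rewrite add0r.
have capVU : (V :&: U = 0)%VS by rewrite capvC.
by have := daddv_pi_add capUV (subvP (addvSr U V) _ Vv); rewrite (daddv_pi_id capVU Vv).
Qed.

Lemma daddv_pi_addE u v : u \in U -> v \in V -> daddv_pi U V (u + v) = u.
Proof. by move=> Uu Vv; rewrite linearD /= daddv_pi_id ?daddv_pi_eq0 ?addr0. Qed.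

Lemma daddv_pi_addf w :
  (U + V = fullv)%VS -> daddv_pi U V w + daddv_pi V U w = w.
Proof. by move=> sumUV; rewrite daddv_pi_add ?sumUV ?memvf. Qed.

End DirectSumProjection.

Section IdealDirectSum.
Variables (F : fieldType) (L : lieAlg F) (L1 L2 : {vspace L}).
Hypotheses (idL1 : lie_ideal L1) (idL2 : lie_ideal L2) (capL : (L1 :&: L2 = 0)%VS).

Lemma lie_br_direct_eq0 x y : x \in L1 -> y \in L2 -> lie_br x y = 0.
Proof.
by move=> L1x L2y; apply: (memv_cap_eq0 capL); [apply: lie_idealr | apply: idL2].
Qed.

Hypothesis sumL : (L1 + L2 = fullv)%VS.

Lemma daddv_pi_lie_br : {morph daddv_pi L1 L2 : x y / lie_br x y}.
Proof.
have capL' : (L2 :&: L1 = 0)%VS by rewrite capvC.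
have cross u v : lie_br (daddv_pi L1 L2 u) (daddv_pi L2 L1 v) = 0.
  by apply: lie_br_direct_eq0; apply: memv_pi.
move=> x y; rewrite -{1}(daddv_pi_addf capL x sumL) -{1}(daddv_pi_addf capL y sumL).
rewrite lie_brDl !lie_brDr.
rewrite cross [lie_br (daddv_pi L2 L1 x) _]lie_brC cross oppr0 addr0 add0r.
by rewrite daddv_pi_addE ?idL1 ?idL2 ?memv_pi.
Qed.

End IdealDirectSum.

Section LfunPair.
Variables (F : fieldType) (A B C : vectType F) (g : 'Hom(A, B)) (h : 'Hom(A, C)).

Definition pair_lfun_fun (x : A) : (B * C)%type := (g x, h x).

Fact pair_lfun_fun_is_linear : linear pair_lfun_fun.
Proof. by move=> a x y; rewrite /pair_lfun_fun !linearP. Qed.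

HB.instance Definition _ := GRing.isLinear.Build F A (B * C)%type *:%R
  pair_lfun_fun pair_lfun_fun_is_linear.

Definition pair_lfun : 'Hom(A, (B * C)%type) := linfun pair_lfun_fun.

Lemma pair_lfunE x : pair_lfun x = (g x, h x).
Proof. by rewrite lfunE. Qed.

End LfunPair.

Section ProdLie.
Variables (F : fieldType) (H1 H2 : lieAlg F).
Implicit Types x y z : (H1 * H2)%type.

Definition prod_br x y : (H1 * H2)%type := (lie_br x.1 y.1, lie_br x.2 y.2).

Fact prod_br_linl a x y z : prod_br (a *: x + y) z = a *: prod_br x z + prod_br y z.
Proof. by rewrite /prod_br /= !lie_linl. Qed.

Fact prod_br_linr a x y z : prod_br z (a *: x + y) = a *: prod_br z x + prod_br z y.
Proof. by rewrite /prod_br /= !lie_linr. Qed.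

Fact prod_br_alt x : prod_br x x = 0.
Proof. by rewrite /prod_br !lie_alt. Qed.

Fact prod_br_jacobi x y z :
  prod_br x (prod_br y z) + prod_br y (prod_br z x) + prod_br z (prod_br x y) = 0.
Proof. by apply/eqP; rewrite xpair_eqE /= !lie_jacobi !eqxx. Qed.

Definition prodLie := LieAlg prod_br_linl prod_br_linr prod_br_alt prod_br_jacobi.

Lemma mem_derived_prod (x : prodLie) :
  (x \in derived prodLie) = (x.1 \in derived H1) && (x.2 \in derived H2).
Proof.
apply/idP/andP => [Dx | [D1x D2x]].
  split.
    rewrite -[x.1](lfunE (GRing.Linear.clone _ _ _ _ fst _)).
    by apply: (@mem_derived_lfun _ prodLie H1) => // u v; rewrite !lfunE.
  rewrite -[x.2](lfunE (GRing.Linear.clone _ _ _ _ snd _)).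
  by apply: (@mem_derived_lfun _ prodLie H2) => // u v; rewrite !lfunE.
have -> : x = pair_lfun \1 0 x.1 + pair_lfun 0 \1 x.2.
  rewrite !pair_lfunE !lfunE; case: x {D1x D2x} => a b.
  by apply/eqP; rewrite xpair_eqE /= addr0 add0r !eqxx.
apply: rpredD; apply: mem_derived_lfun => // u v;
  by rewrite !pair_lfunE !lfunE /= /prod_br /= lie_br0l.
Qed.

End ProdLie.

Lemma derived_iso_direct_sum (F : fieldType) (L : lieAlg F) (L1 L2 : {vspace L})
    (H1 H2 : lieAlg F) :
  lie_ideal L1 -> lie_ideal L2 -> (L1 + L2)%VS = fullv -> (L1 :&: L2)%VS = 0%VS ->
  derived_iso H1 L1 -> derived_iso H2 L2 ->
  derived_iso (prodLie H1 H2) (fullv : {vspace L}).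
Proof.
move=> idL1 idL2 sumL capL [f1 [im1 inj1 hom1]] [f2 [im2 inj2 hom2]].
have capL' : (L2 :&: L1 = 0)%VS by rewrite capvC.
have sumL' : (L2 + L1 = fullv)%VS by rewrite addvC.
pose f : 'Hom(L, prodLie H1 H2) :=
  pair_lfun (f1 \o daddv_pi L1 L2) (f2 \o daddv_pi L2 L1).
have fE x : f x = (f1 (daddv_pi L1 L2 x), f2 (daddv_pi L2 L1 x)).
  by rewrite pair_lfunE !comp_lfunE.
exists f; split.
- apply/eqP; rewrite eqEsubv; apply/andP; split; apply/subvP => w.
    case/memv_imgP => x _ ->; rewrite mem_derived_prod fE -im1 -im2.
    by rewrite !memv_img ?memv_pi.
  rewrite mem_derived_prod -im1 -im2.
  case/andP => /memv_imgP [u1 L1u1 E1] /memv_imgP [u2 L2u2 E2].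
  apply/memv_imgP; exists (u1 + u2); rewrite ?memvf // fE daddv_pi_addE //.
  by rewrite addrC daddv_pi_addE //; case: w E1 E2 => /= ? ? -> ->.
- move=> x y _ _; rewrite !fE => -[/inj1 e1 /inj2 e2].
  rewrite -(daddv_pi_addf capL x sumL) -(daddv_pi_addf capL y sumL).
  by rewrite e1 ?memv_pi // e2 ?memv_pi.
- move=> x y _ _; rewrite !fE /= /prod_br /= !daddv_pi_lie_br //.
  by rewrite hom1 ?memv_pi // hom2 ?memv_pi.
Qed.

Section Quotient.
Variables (F : fieldType) (L : lieAlg F) (I : {vspace L}).
Hypothesis idI : lie_ideal I.
Implicit Types x y z : L.

(* The quotient L / I is carried by L itself, identified with a complement of I:
   the bracket is projected along I onto that complement. *)
Definition quot_proj : 'Hom(L, L) := (\1 - projv I)%VF.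

Lemma quot_projE x : quot_proj x = x - projv I x.
Proof. by rewrite !lfunE /= !lfunE. Qed.

Lemma quot_proj_eq0 x : (quot_proj x == 0) = (x \in I).
Proof.
rewrite quot_projE subr_eq0; apply/eqP/idP => [-> | Ix]; first exact: memv_proj.
by rewrite projv_id.
Qed.

Lemma memv_sub_quot_proj x : x - quot_proj x \in I.
Proof. by rewrite quot_projE opprB addrC subrK memv_proj. Qed.

Lemma quot_proj_brr x y : quot_proj (lie_br x (quot_proj y)) = quot_proj (lie_br x y).
Proof.
apply/eqP; rewrite -subr_eq0 -linearB /= -lie_brBr quot_proj_eq0.
by apply: idI; rewrite -opprB rpredN memv_sub_quot_proj.
Qed.

Lemma quot_proj_brl x y : quot_proj (lie_br (quot_proj x) y) = quot_proj (lie_br x y).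
Proof. by rewrite lie_brC linearN /= quot_proj_brr -linearN /= -lie_brC. Qed.

Definition quot_br x y := quot_proj (lie_br x y).

Fact quot_br_linl a x y z : quot_br (a *: x + y) z = a *: quot_br x z + quot_br y z.
Proof. by rewrite /quot_br lie_linl linearP. Qed.

Fact quot_br_linr a x y z : quot_br z (a *: x + y) = a *: quot_br z x + quot_br z y.
Proof. by rewrite /quot_br lie_linr linearP. Qed.

Fact quot_br_alt x : quot_br x x = 0.
Proof. by rewrite /quot_br lie_alt linear0. Qed.

Fact quot_br_jacobi x y z :
  quot_br x (quot_br y z) + quot_br y (quot_br z x) + quot_br z (quot_br x y) = 0.
Proof. by rewrite /quot_br !quot_proj_brr -!linearD lie_jacobi linear0. Qed.

Definition quotLie := LieAlg quot_br_linl quot_br_linr quot_br_alt quot_br_jacobi.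

Lemma quot_proj_lie_br : {morph (quot_proj : 'Hom(L, quotLie)) : x y / lie_br x y}.
Proof. by move=> x y /=; rewrite /quot_br quot_proj_brr quot_proj_brl. Qed.

Lemma derived_quot : derived quotLie = (quot_proj @: derived L)%VS.
Proof.
apply/eqP; rewrite eqEsubv (limg_derived quot_proj_lie_br) andbT.
by apply: derived_sub => x y; rewrite memv_img ?mem_derived.
Qed.

End Quotient.

Section DerivedIsoSummand.
Variables (F : fieldType) (L H : lieAlg F) (L1 L2 : {vspace L}) (f : 'Hom(L, H)).
Hypotheses (idL1 : lie_ideal L1) (idL2 : lie_ideal L2).
Hypotheses (sumL : (L1 + L2 = fullv)%VS) (capL : (L1 :&: L2 = 0)%VS).
Hypotheses (imf : (f @: fullv = derived H)%VS) (injf : injective f).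
Hypothesis fM : {morph f : x y / lie_br x y}.
Hypothesis ctrL1 : center_trivial L1.

Lemma lie_ideal_img_summand : lie_ideal (f @: L2).
Proof.
have capL' : (L2 :&: L1 = 0)%VS by rewrite capvC.
move=> h _ /memv_imgP [y L2y ->].
have /memv_imgP [z _ Ez] : lie_br h (f y) \in (f @: fullv)%VS by rewrite imf mem_derived.
have /memv_addP [z1 L1z1 [z2 L2z2 Dz]] : z \in (L1 + L2)%VS by rewrite sumL memvf.
suff z1_0 : z1 = 0 by rewrite Ez Dz z1_0 add0r memv_img.
apply: ctrL1 => // w L1w.
have /memv_imgP [u _ Eu] : lie_br (f w) h \in (f @: fullv)%VS by rewrite imf mem_derived.
have wz_opp : lie_br w z = - lie_br y u.
  have := lie_jacobi h (f y) (f w).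
  rewrite -fM (lie_br_direct_eq0 idL2 idL1 capL') // linear0 lie_br0r add0r.
  rewrite Eu Ez -!fM -linearD.
  by rewrite -(linear0 f) => /injf /eqP; rewrite addrC addr_eq0 => /eqP.
have L2wz1 : lie_br w z1 \in L2.
  rewrite -[lie_br w z1]addr0 -(lie_br_direct_eq0 idL1 idL2 capL L1w L2z2).
  rewrite -lie_brDr -Dz.
  by rewrite wz_opp rpredN lie_idealr.
by rewrite lie_brC (memv_cap_eq0 capL (idL1 _ L1z1) L2wz1) oppr0.
Qed.

Lemma derived_iso_summand : derived_iso (quotLie lie_ideal_img_summand) L1.
Proof.
pose p := quot_proj (f @: L2).
exists ((p \o f)%VF : 'Hom(L, quotLie lie_ideal_img_summand)); split.
- have /eqP pL2 : (p @: (f @: L2) == 0)%VS.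
    by rewrite -lkerE; apply/subvP => m Mm; rewrite memv_ker quot_proj_eq0.
  by rewrite limg_comp derived_quot -imf -sumL !limgD pL2 addv0.
- move=> x y L1x L1y; rewrite !comp_lfunE => /eqP.
  rewrite -subr_eq0 -!linearB /= quot_proj_eq0 => /memv_imgP [t L2t /injf Et].
  by apply/eqP; rewrite -subr_eq0 (memv_cap_eq0 capL (rpredB L1x L1y)) ?Et.
- by move=> x y _ _; rewrite !comp_lfunE fM quot_proj_lie_br.
Qed.

End DerivedIsoSummand.

Theorem lemma2p7 (F : fieldType) (L : lieAlg F) (L1 L2 : {vspace L}) :
  lie_ideal L1 -> lie_ideal L2 ->
  (L1 + L2)%VS = fullv -> (L1 :&: L2)%VS = 0%VS ->
  (((exists H1 : lieAlg F, derived_iso H1 L1) /\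
    (exists H2 : lieAlg F, derived_iso H2 L2)) ->
     exists H : lieAlg F, derived_iso H (fullv : {vspace L}))
  /\
  ((exists H : lieAlg F, derived_iso H (fullv : {vspace L})) ->
     center_trivial L1 ->
     exists K : lieAlg F, derived_iso K L1).
Proof.
move=> idL1 idL2 sumL capL; split.
  move=> [[H1 iso1] [H2 iso2]]; exists (prodLie H1 H2).
  exact: (derived_iso_direct_sum idL1 idL2 sumL capL iso1 iso2).
move=> [H [f [imf injf homf]]] ctrL1.
have injf' : injective f by move=> x y; apply: injf; rewrite memvf.
have fM : {morph f : x y / lie_br x y} by move=> x y; apply: homf; rewrite memvf.
by eexists; exact: (derived_iso_summand idL1 idL2 sumL capL imf injf' fM ctrL1).
Qed.
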